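(* Let $r\ge1$ and $n\ge1$ be integers, let $A\subset\{0,1\}^n$ have density $\alpha$ inside $\{0,1\}^n$ and let $B\subset\{0,\dots,r\}^n$ have density $\beta$ inside $\{0,\dots,r\}^n$. Then the sumset $A+B=\{a+b:a\in A,b\in B\}$ (addition in $\mathbb{Z}^n$) has density at least $\alpha\beta$ inside $\{0,\dots,r+1\}^n$.
   Context: The density of a subset $X$ of a finite set $Y$ inside $Y$ is $|X|/|Y|$. *)

From mathcomp Require Import all_boot all_order all_algebra.
Set Implicit Arguments. Unset Strict Implicit. Unset Printing Implicit Defensive.
Import GRing.Theory Num.Theory.

(* Points of {0,1}^n are finite functions 'I_n -> bool (bool coerces to 0/1 in nat);
   points of {0,...,m-1}^n are finite functions 'I_n -> 'I_m. *)

(* Every sum a+b with a in {0,1}^n, b in {0,..,r}^n lies in {0,..,r+1}^n, so this is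
   exactly the set {a+b : a in A, b in B}. *)
Definition sumset (n r : nat) (A : {set {ffun 'I_n -> bool}})
  (B : {set {ffun 'I_n -> 'I_r.+1}}) : {set {ffun 'I_n -> 'I_r.+2}} :=
  [set c : {ffun 'I_n -> 'I_r.+2} | [exists a in A, exists b in B, [forall i, (c i : nat) == (a i : nat) + b i]]].

Definition density (T : finType) (X : {set T}) : rat := (#|X|%:R / #|T|%:R)%R.

From mathcomp Require Import all_boot all_order all_algebra.
From mathcomp Require Import ring lra.
Import Order.TTheory GRing.Theory Num.Theory.
Set Implicit Arguments. Unset Strict Implicit. Unset Printing Implicit Defensive.
Local Open Scope ring_scope.

(* Induct on n, slicing along the first coordinate: A splits into A_0, A_1 of
   densities a_0, a_1, B into B_0, ..., B_r of densities b_j, and the k-th slice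
   of A + B contains A_0 + B_k and A_1 + B_(k-1), so by induction its density
   c_k is at least a_0 b_k and a_1 b_(k-1).  Cutting at any threshold m gives
   sum c >= a_0 sum_(j <= m) b_j + a_1 sum_(j >= m) b_j; averaging over m with
   weights b_m, and using
     2 sum_m b_m sum_(j <= m) b_j = (sum b)^2 + sum b^2 >= (r+2)/(r+1) (sum b)^2
   (Cauchy-Schwarz), yields sum c / (r+2) >= (a_0 + a_1)/2 * sum b / (r+1). *)

Definition prefix_sum (V : nmodType) (N : nat) (b : nat -> V) (m : nat) : V :=
  \sum_(j < N | (j <= m)%N) b j.

Definition suffix_sum (V : nmodType) (N : nat) (b : nat -> V) (m : nat) : V :=
  \sum_(j < N | (m <= j)%N) b j.

Lemma sum_ord_split_at (V : nmodType) (N m : nat) (c : nat -> V) : (m < N)%N ->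
  \sum_(k < N.+1) c k = prefix_sum N c m + suffix_sum N (fun j => c j.+1) m.
Proof.
move=> ltmN; rewrite (bigID (fun k : 'I_N.+1 => (k <= m)%N)) /=; congr (_ + _).
  by rewrite big_mkcond big_ord_recr /= leqNgt ltmN addr0 -big_mkcond.
rewrite big_mkcond big_ord_recl /= add0r /suffix_sum [RHS]big_mkcond.
by apply: eq_bigr => j _; rewrite /bump leq0n add1n -ltnNge ltnS.
Qed.

Lemma prefix_add_suffix (V : nmodType) (N m : nat) (b : nat -> V) : (m < N)%N ->
  prefix_sum N b m + suffix_sum N b m = \sum_(j < N) b j + b m.
Proof.
move=> ltmN; have suffixE : suffix_sum N b m = b m + \sum_(j < N | (m < j)%N) b j.
  rewrite /suffix_sum (bigD1 (Ordinal ltmN)) //=; congr (_ + _).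
  by apply: eq_bigl => j; rewrite ltn_neqAle andbC -val_eqE /= eq_sym.
rewrite suffixE [in RHS](bigID (fun j : 'I_N => (j <= m)%N)) /= [b m + _]addrC addrA.
by congr (_ + _ + _); apply: eq_bigl => j; rewrite -ltnNge.
Qed.

Lemma sum_mul_prefix_suffix (F : comPzSemiRingType) (N : nat) (b : nat -> F) :
  \sum_(m < N) b m * prefix_sum N b m = \sum_(m < N) b m * suffix_sum N b m.
Proof.
rewrite /prefix_sum /suffix_sum.
under eq_bigr do rewrite big_distrr.
under [RHS]eq_bigr do rewrite big_distrr.
rewrite (exchange_big_dep predT) //=; apply: eq_bigr => m _.
by apply: eq_bigr => j _; rewrite mulrC.
Qed.

Lemma sqr_sum_le_mul_sum_sqr (F : realFieldType) (N : nat) (b : nat -> F) :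
  (\sum_(j < N) b j) ^+ 2 <= N%:R * \sum_(j < N) b j ^+ 2.
Proof.
set S := \sum_(j < N) b j; set Q := \sum_(j < N) b j ^+ 2.
have row_sum i : \sum_(j < N) (b i - b j) ^+ 2 = N%:R * b i ^+ 2 + Q - 2 * b i * S.
  rewrite (eq_bigr (fun j : 'I_N => b i ^+ 2 + b j ^+ 2 - 2 * b i * b j)); last first.
    by move=> j _; rewrite sqrrB; ring.
  rewrite !big_split /= sumr_const card_ord sumrN -mulr_sumr mulr_natl.
  rewrite -/S -/Q; ring.
have : 0 <= \sum_(i < N) \sum_(j < N) (b i - b j) ^+ 2.
  by apply: sumr_ge0 => i _; apply: sumr_ge0 => j _; apply: sqr_ge0.
under eq_bigr do rewrite row_sum.
rewrite sumrB big_split /= -mulr_sumr sumr_const card_ord -mulr_suml -mulr_sumr -/S -/Q.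
rewrite -mulr_natr; lra.
Qed.

Lemma double_sum_mul_prefix (F : comPzRingType) (N : nat) (b : nat -> F) :
  2 * \sum_(m < N) b m * prefix_sum N b m
  = (\sum_(j < N) b j) ^+ 2 + \sum_(j < N) b j ^+ 2.
Proof.
rewrite mulr2n mulrDl mul1r {2}sum_mul_prefix_suffix -big_split /=.
under eq_bigr => m _ do rewrite -mulrDr prefix_add_suffix ?ltn_ord // mulrDr.
by rewrite big_split /= expr2 mulr_suml; congr (_ + _).
Qed.

Lemma sqr_sum_le_sum_mul_prefix (F : realFieldType) (N : nat) (b : nat -> F) :
  N.+1%:R * (\sum_(j < N) b j) ^+ 2 <= 2 * N%:R * \sum_(m < N) b m * prefix_sum N b m.
Proof.
rewrite mulrAC double_sum_mul_prefix.
have := sqr_sum_le_mul_sum_sqr N b; rewrite -natr1; lra.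
Qed.

Section ShiftedDomination.
Variables (F : realFieldType) (N : nat) (a0 a1 : F) (b c : nat -> F).
Hypotheses (N_gt0 : (0 < N)%N) (a0_ge0 : 0 <= a0) (a1_ge0 : 0 <= a1)
  (b_ge0 : forall j, 0 <= b j)
  (a0b_le_c : forall j, (j < N)%N -> a0 * b j <= c j)
  (a1b_le_c : forall j, (j < N)%N -> a1 * b j <= c j.+1).

Lemma prefix_suffix_le_sum m : (m < N)%N ->
  a0 * prefix_sum N b m + a1 * suffix_sum N b m <= \sum_(k < N.+1) c k.
Proof.
move=> ltmN; rewrite (sum_ord_split_at c ltmN) /prefix_sum /suffix_sum !mulr_sumr.
by apply: lerD; apply: ler_sum => j _; [apply: a0b_le_c | apply: a1b_le_c].
Qed.

Lemma sum_mul_prefix_le :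
  (a0 + a1) * \sum_(m < N) b m * prefix_sum N b m
  <= (\sum_(j < N) b j) * \sum_(k < N.+1) c k.
Proof.
rewrite mulr_suml mulrDl {2}sum_mul_prefix_suffix !mulr_sumr -big_split /=.
apply: ler_sum => m _; rewrite mulrCA [a1 * _]mulrCA -mulrDr.
by rewrite ler_wpM2l // prefix_suffix_le_sum.
Qed.

Lemma shifted_domination_density :
  (a0 + a1) / 2 * ((\sum_(j < N) b j) / N%:R) <= (\sum_(k < N.+1) c k) / N.+1%:R.
Proof.
set S := \sum_(j < N) b j; set C := \sum_(k < N.+1) c k.
have S_ge0 : 0 <= S by apply: sumr_ge0.
have C_ge0 : 0 <= C.
  apply: le_trans (prefix_suffix_le_sum N_gt0).
  by apply: addr_ge0; apply: mulr_ge0 => //; apply: sumr_ge0.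
have N_pos : 0 < N%:R :> F by rewrite ltr0n.
have le_sqrS : (a0 + a1) * N.+1%:R * S ^+ 2 <= 2 * N%:R * (S * C).
  apply: le_trans (_ : (a0 + a1) * (2 * N%:R * \sum_(m < N) b m * prefix_sum N b m) <= _).
    by rewrite -mulrA ler_wpM2l ?addr_ge0 // sqr_sum_le_sum_mul_prefix.
  by rewrite mulrCA ler_wpM2l ?mulr_ge0 ?ler0n // sum_mul_prefix_le.
move: S_ge0; rewrite le0r => /predU1P[->|S_pos].
  by rewrite mul0r mulr0 divr_ge0 ?ler0n.
have le_S : (a0 + a1) * N.+1%:R * S <= 2 * N%:R * C.
  by rewrite -(ler_pM2r S_pos); move: le_sqrS; rewrite expr2 [S * C]mulrC !mulrA.
have -> : (a0 + a1) / 2 * (S / N%:R)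
    = (a0 + a1) * N.+1%:R * S / (2 * N%:R) / N.+1%:R.
  by field; rewrite nat1r !pnatr_eq0 -!lt0n N_gt0.
by rewrite ler_pM2r ?invr_gt0 ?ltr0n // ler_pdivrMr ?mulr_gt0 // [C * _]mulrC.
Qed.
End ShiftedDomination.

Section Slices.
Variables (T : finType) (n : nat).

Definition fcons (t : T) (y : {ffun 'I_n -> T}) : {ffun 'I_n.+1 -> T} :=
  [ffun i => if unlift ord0 i is Some j then y j else t].

Definition slice (X : {set {ffun 'I_n.+1 -> T}}) (t : T) : {set {ffun 'I_n -> T}} :=
  [set y | fcons t y \in X].

Lemma fcons0 t y : fcons t y ord0 = t.
Proof. by rewrite ffunE unlift_none. Qed.

Lemma fconsS t y j : fcons t y (lift ord0 j) = y j.
Proof. by rewrite ffunE liftK. Qed.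

Lemma fcons_bij : bijective (fun p : T * {ffun 'I_n -> T} => fcons p.1 p.2).
Proof.
exists (fun x : {ffun _ -> T} => (x ord0, [ffun j => x (lift ord0 j)])).
  by case=> t y /=; rewrite fcons0; congr pair; apply/ffunP=> j; rewrite ffunE fconsS.
move=> x; apply/ffunP=> i; rewrite ffunE; case: unliftP => [j ->|->] //.
by rewrite ffunE.
Qed.

Lemma card_slices (X : {set {ffun 'I_n.+1 -> T}}) :
  #|X| = (\sum_(t : T) #|slice X t|)%N.
Proof.
rewrite -sum1_card (reindex _ (onW_bij _ fcons_bij)) /=.
under [RHS]eq_bigr do rewrite -sum1_card.
by rewrite pair_big_dep /=; apply: eq_bigl => -[t y] /=; rewrite inE.
Qed.

End Slices.

Lemma sumset_slice n r (A : {set {ffun 'I_n.+1 -> bool}})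
    (B : {set {ffun 'I_n.+1 -> 'I_r.+1}}) (i : bool) (j : 'I_r.+1) (k : 'I_r.+2) :
  k = (i + j)%N :> nat -> sumset (slice A i) (slice B j) \subset slice (sumset A B) k.
Proof.
move=> def_k; apply/subsetP => y; rewrite !inE.
case/existsP=> a /andP[+ /existsP[b /andP[+ /forallP sum_ab]]]; rewrite !inE => Aa Bb.
apply/existsP; exists (fcons i a); rewrite Aa /=.
apply/existsP; exists (fcons j b); rewrite Bb /=.
apply/forallP => l; case: (unliftP ord0 l) => [l' ->|->].
  by rewrite !fconsS; apply: sum_ab.
by rewrite !fcons0 def_k.
Qed.

Lemma density_ge0 (T : finType) (X : {set T}) : 0 <= density X.
Proof. by rewrite divr_ge0. Qed.

Lemma density_subset (T : finType) (X Y : {set T}) :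
  X \subset Y -> density X <= density Y.
Proof.
by move=> sXY; rewrite ler_wpM2r ?invr_ge0 // ler_nat subset_leq_card.
Qed.

Lemma density_slices (T : finType) n (X : {set {ffun 'I_n.+1 -> T}}) :
  density X = (\sum_(t : T) density (slice X t)) / #|T|%:R.
Proof.
rewrite /density card_slices natr_sum -mulr_suml !card_ffun !card_ord expnS natrM.
by rewrite invfM mulrA mulrAC.
Qed.

Lemma density_ffun0 (T : finType) (X : {set {ffun 'I_0 -> T}}) :
  density X = (X != set0)%:R.
Proof.
have card_le1 : (#|X| <= 1)%N.
  by rewrite (leq_trans (max_card _)) // card_ffun card_ord.
rewrite /density card_ffun card_ord expn0 divr1 -cards_eq0.
by case: #|X| card_le1 => [|[]].
Qed.

Lemma density_sumset_ffun0 r (A : {set {ffun 'I_0 -> bool}})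
    (B : {set {ffun 'I_0 -> 'I_r.+1}}) :
  density A * density B <= density (sumset A B).
Proof.
rewrite !density_ffun0.
have [->|nzA] := eqVneq A set0; first by rewrite mul0r ler0n.
have [->|nzB] := eqVneq B set0; first by rewrite mulr0 ler0n.
rewrite /= mul1r ler_nat lt0b.
case/set0Pn: nzA => a Aa; case/set0Pn: nzB => b Bb.
apply/set0Pn; exists [ffun=> ord0]; rewrite inE.
apply/existsP; exists a; rewrite Aa; apply/existsP; exists b; rewrite Bb.
by apply/forallP => -[].
Qed.

Lemma density_sumset_ge r n (A : {set {ffun 'I_n -> bool}})
    (B : {set {ffun 'I_n -> 'I_r.+1}}) :
  density A * density B <= density (sumset A B).
Proof.
elim: n A B => [|n IH] A B; first exact: density_sumset_ffun0.
have sum_slicesE m (X : {set {ffun 'I_n.+1 -> 'I_m.+1}}) :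
    \sum_(t : 'I_m.+1) density (slice X t) = \sum_(j < m.+1) density (slice X (inord j)).
  by apply: eq_bigr => j _; rewrite inord_val.
rewrite !density_slices big_bool /= !sum_slicesE card_bool !card_ord addrC.
apply: (shifted_domination_density (b := fun j => density (slice B (inord j)))
                                  (c := fun k => density (slice (sumset A B) (inord k))))
  => [|||j|j ltjr|j ltjr] //; try exact: density_ge0.
  apply: le_trans (IH _ _) _; apply/density_subset/sumset_slice.
  by rewrite !inordK // leqW.
apply: le_trans (IH _ _) _; apply/density_subset/sumset_slice.
by rewrite !inordK.
Qed.

Theorem proposition3p1 (r n : nat) (hr : (1 <= r)%N) (hn : (1 <= n)%N)
  (A : {set {ffun 'I_n -> bool}}) (B : {set {ffun 'I_n -> 'I_r.+1}}) :
  (density A * density B <= density (sumset A B))%R.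
Proof. exact: density_sumset_ge. Qed.
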